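(* Let $(\curlywedge,\curlyvee)$ be the reference pair of a Morse sequence $W$ on a finite simplicial complex $K$, and let $\widehat{W}$ denote the set of simplices that are critical for $W$. If $\kappa \in \widehat{W}$ and $\nu \in K$, then: (1) $\kappa \in \curlywedge(\nu)$ if and only if there exists a $\curlywedge$-path from $\nu$ to $\kappa$; (2) $\kappa \in \curlyvee(\nu)$ if and only if there exists a $\curlyvee$-path from $\kappa$ to $\nu$.
   Context: $K$ is a finite simplicial complex; chains are taken with $\mathbb{Z}_2$ coefficients, so a $p$-chain is a set of $p$-simplices and sums are symmetric differences. For a $p$-simplex $\sigma$, $\partial(\sigma)$ is the set of its $(p-1)$-faces and $\delta(\sigma)$ is the set of $(p+1)$-simplices of $K$ containing $\sigma$; these extend linearly to chains. A Morse sequence $W=\langle \emptyset=K_0,\ldots,K_k=K\rangle$ is a sequence of simplicial complexes in which each $K_i$ is obtained from $K_{i-1}$ either by an elementary filling (adding one simplex $\nu$ that is a facet of $K_i$; then $\nu$ is called critical) or by an elementary expansion (adding $\sigma\subset\tau$ with $\dim\tau=\dim\sigma+1$, where $(\sigma,\tau)$ is a free pair of $K_i$, i.e. $\tau$ is the only face of $K_i$ containing $\sigma$; then $(\sigma,\tau)$ is a regular pair, $\sigma$ is lower regular and $\tau$ is upper regular). $\widehat{W}$ is the set of critical simplices. The reference map $\curlywedge$ and coreference map $\curlyvee$ are the unique maps assigning to each $p$-simplex of $K$ a set (a $\mathbb{Z}_2$-chain) of critical $p$-simplices, extended linearly to chains, such that $\curlywedge(\nu)=\curlyvee(\nu)=\nu$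 for every critical $\nu$; for every upper regular $\tau$, $\curlywedge(\tau)=0$ and $\curlywedge(\partial(\tau))=0$; and for every lower regular $\sigma$, $\curlyvee(\sigma)=0$ and $\curlyvee(\delta(\sigma))=0$. The pair $(\curlywedge,\curlyvee)$ is called the reference pair of $W$. A gradient path in $W$ from $\sigma_0$ to $\sigma_k$ is a sequence $\langle\sigma_0,\tau_0,\ldots,\sigma_{k-1},\tau_{k-1},\sigma_k\rangle$ ($k\ge 0$) of $p$-simplices $\sigma_i$ and $(p+1)$-simplices $\tau_i$ such that each $(\sigma_i,\tau_i)$ is a regular pair of $W$ and $\sigma_{i+1}\in\partial(\tau_i)$ with $\sigma_{i+1}\neq\sigma_i$. A cogradient path in $W$ from $\tau_0$ to $\tau_k$ is a sequence $\langle\tau_0,\sigma_1,\tau_1,\ldots,\sigma_k,\tau_k\rangle$ ($k\ge0$) of $p$-simplices $\tau_i$ and $(p-1)$-simplices $\sigma_i$ such that each $(\sigma_i,\tau_i)$ is a regular pair of $W$ and $\tau_{i-1}\in\delta(\sigma_i)$ with $\tau_i\neq\tau_{i-1}$. A $\curlywedge$-path is a gradient path $\langle\sigma_0,\tau_0,\ldots,\tau_{k-1},\sigma_k\rangle$ such that $\sigma_k\in\curlywedge(\sigma_i)$ for every $i\in[0,k]$. A $\curlyvee$-path is a cogradient path $\langle\tau_0,\sigma_1,\tau_1,\ldots,\sigma_k,\tau_k\rangle$ such that $\tau_0\in\curlyvee(\tau_i)$ for every $i\in[0,k]$. *)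

From mathcomp Require Import all_boot.
Set Implicit Arguments. Unset Strict Implicit. Unset Printing Implicit Defensive.

Section Morse.
Variable V : finType.

(* A simplex is a nonempty finite set of vertices; a (finite) simplicial
   complex is a set of simplices closed under nonempty subsets.
   The dimension of a simplex s is #|s| - 1. *)
Definition simplex := {set V}.
Definition complex := {set simplex}.

Definition is_complex (K : complex) : Prop :=
  set0 \notin K /\
  forall s t : simplex, s \in K -> t \subset s -> t != set0 -> t \in K.

(* A step of a Morse sequence: inl nu = elementary filling adding nu,
   inr (sigma, tau) = elementary expansion adding sigma and tau. *)
Definition step := (simplex + (simplex * simplex))%type.
Definition added (x : step) : complex :=
  match x with inl nu => [set nu] | inr (s, t) => [set s; t] end.

Definition cx (W : seq step) : complex := \bigcup_(x <- W) added x.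

Definition valid_step (Kp : complex) (x : step) : Prop :=
  let Kn := Kp :|: added x in
  match x with
  | inl nu =>
      nu \notin Kp /\ is_complex Kn /\
      (forall y, y \in Kn -> ~~ (nu \proper y))
  | inr (s, t) =>
      s \notin Kp /\ t \notin Kp /\ s \proper t /\ #|t| = #|s|.+1 /\
      is_complex Kn /\
      (forall y, y \in Kn -> s \proper y -> y = t)
  end.

Fixpoint morse_from (Kp : complex) (W : seq step) : Prop :=
  match W with
  | [::] => True
  | x :: W' => valid_step Kp x /\ morse_from (Kp :|: added x) W'
  end.

Definition morse_seq (K : complex) (W : seq step) : Prop :=
  morse_from set0 W /\ cx W = K.

Definition critical (W : seq step) (nu : simplex) : bool := inl nu \in W.
Definition regular_pair (W : seq step) (s t : simplex) : bool := inr (s, t) \in W.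
Definition upper_regular (W : seq step) (t : simplex) : bool :=
  [exists s, regular_pair W s t].
Definition lower_regular (W : seq step) (s : simplex) : bool :=
  [exists t, regular_pair W s t].

Definition bnd (K : complex) (s : simplex) : complex :=
  [set f in K | (f \subset s) && (#|f|.+1 == #|s|)].
Definition cobnd (K : complex) (s : simplex) : complex :=
  [set c in K | (s \subset c) && (#|c| == #|s|.+1)].

(* Z_2-linear extension of a map from simplices to Z_2-chains *)
Definition chain_map (f : simplex -> complex) (c : complex) : complex :=
  [set k | odd #|[set s in c | k \in f s]|].

Definition ref_pair (K : complex) (W : seq step)
  (wedge vee : simplex -> complex) : Prop :=
  (forall s, s \in K -> wedge s \subset [set k | critical W k & #|k| == #|s|]) /\
  (forall s, s \in K -> vee s \subset [set k | critical W k & #|k| == #|s|]) /\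
  (forall nu, critical W nu -> wedge nu = [set nu] /\ vee nu = [set nu]) /\
  (forall t, upper_regular W t -> wedge t = set0 /\ chain_map wedge (bnd K t) = set0) /\
  (forall s, lower_regular W s -> vee s = set0 /\ chain_map vee (cobnd K s) = set0).

(* gradient path <sigma_0, tau_0, ..., tau_{k-1}, sigma_k> from x to y,
   encoded by x = sigma_0 and ps = [:: (tau_0, sigma_1); ...; (tau_{k-1}, sigma_k)] *)
Fixpoint gpath (K : complex) (W : seq step) (x : simplex)
    (ps : seq (simplex * simplex)) (y : simplex) : Prop :=
  match ps with
  | [::] => x = y
  | (t, s') :: r =>
      regular_pair W x t /\ s' \in bnd K t /\ s' <> x /\ gpath K W s' r y
  end.

(* cogradient path <tau_0, sigma_1, tau_1, ..., sigma_k, tau_k> from x to y,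
   encoded by x = tau_0 and ps = [:: (sigma_1, tau_1); ...; (sigma_k, tau_k)] *)
Fixpoint cgpath (K : complex) (W : seq step) (x : simplex)
    (ps : seq (simplex * simplex)) (y : simplex) : Prop :=
  match ps with
  | [::] => x = y
  | (s, t) :: r =>
      regular_pair W s t /\ x \in cobnd K s /\ t <> x /\ cgpath K W t r y
  end.

Definition wedge_path (K : complex) (W : seq step) (wedge : simplex -> complex)
    (x y : simplex) : Prop :=
  exists ps, gpath K W x ps y /\
    (forall s, s \in x :: map snd ps -> y \in wedge s).

Definition vee_path (K : complex) (W : seq step) (vee : simplex -> complex)
    (x y : simplex) : Prop :=
  exists ps, cgpath K W x ps y /\
    (forall t, t \in x :: map snd ps -> x \in vee t).

End Morse.

From mathcomp Require Import all_boot.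
Set Implicit Arguments. Unset Strict Implicit. Unset Printing Implicit Defensive.

(* For the reference map, scan W from left
   to right: if kappa is in wedge(nu) and nu is the lower simplex of a regular
   pair (nu, tau), then wedge(bnd tau) = 0 forces kappa into wedge(nu') for
   another face nu' of tau, which lies strictly earlier in W, so a gradient
   path from nu' to kappa extends to one from nu.  For the coreference map,
   scan from right to left: if nu is the upper simplex of a regular pair
   (sigma, nu), then vee(cobnd sigma) = 0 yields another coface nu' of sigma,
   which by freeness of the pair appears strictly later in W, and a cogradient
   path from kappa to nu' extends to nu.  Critical simplices end both paths,
   and the converses hold because the path conditions include the endpoints. *)

Section MorseSequence.
Variable V : finType.
Implicit Types (Kp : complex V) (P Q : seq (step V)) (x : step V).
Implicit Types (s t : simplex V).

Lemma cx_nil : cx [::] = set0 :> complex V.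
Proof. by rewrite /cx big_nil. Qed.

Lemma cx_cat P Q : cx (P ++ Q) = cx P :|: cx Q.
Proof. by rewrite /cx big_cat. Qed.

Lemma cx_cons x Q : cx (x :: Q) = added x :|: cx Q.
Proof. by rewrite /cx big_cons. Qed.

Lemma cx_rcons P x : cx (rcons P x) = cx P :|: added x.
Proof. by rewrite -cats1 cx_cat cx_cons cx_nil setU0. Qed.

Lemma morse_from_cat Kp P Q :
  morse_from Kp (P ++ Q) <-> morse_from Kp P /\ morse_from (Kp :|: cx P) Q.
Proof.
elim: P Kp => [|x P IH] Kp /=; first by rewrite cx_nil setU0; tauto.
by rewrite cx_cons setUA; have := IH (Kp :|: added x); tauto.
Qed.

Lemma mem_step W P x Q : P ++ x :: Q = W -> x \in W.
Proof. by move=> <-; rewrite mem_cat mem_head orbT. Qed.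

Lemma morse_seq_valid_step K W P x Q :
  morse_seq K W -> P ++ x :: Q = W -> valid_step (cx P) x.
Proof.
move=> [+ _] eW; rewrite -eW => /morse_from_cat[_ /= [valid _]].
by rewrite set0U in valid.
Qed.

Lemma valid_expansion_face Kp s t (s' : simplex V) :
  valid_step Kp (inr (s, t)) -> s' \proper t -> s' != set0 -> s' != s ->
  s' \in Kp.
Proof.
move=> [_ [_ [_ [_ [[_ closed] _]]]]] s't s'0 s's.
have := closed t s'; rewrite !inE eqxx !orbT => /(_ isT (proper_sub s't) s'0).
by rewrite (negPf s's) => /orP[// | /eqP s't_eq]; rewrite s't_eq properxx in s't.
Qed.

Lemma valid_expansion_coface Kp s t (t' : simplex V) :
  valid_step Kp (inr (s, t)) -> s \proper t' -> t' != t ->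
  t' \notin Kp :|: added (inr (s, t)).
Proof. by move=> [_ [_ [_ [_ [_ free]]]]] st' t't; apply: contra t't => /free ->. Qed.

Lemma chain_map_eq0_other (f : simplex V -> complex V) (c : complex V) s k :
  chain_map f c = set0 -> s \in c -> k \in f s ->
  exists s', [/\ s' \in c, s' != s & k \in f s'].
Proof.
move=> f_c0 sc ks.
have [/existsP[s' /and3P[s'c s's ks']] | /existsPn no_other] :=
  boolP [exists s', [&& s' \in c, s' != s & k \in f s']]; first by exists s'.
move/setP/(_ k): f_c0; rewrite !inE.
suff -> : [set s0 in c | k \in f s0] = [set s] by rewrite cards1.
apply/setP => y; rewrite !inE; have [-> | ys] := eqVneq y s; first by rewrite sc ks.
by apply/negbTE; have := no_other y; rewrite ys.
Qed.

Lemma cgpath_rcons (K : complex V) W a ps b s t :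
  cgpath K W a ps b -> regular_pair W s t -> b \in cobnd K s -> t <> b ->
  cgpath K W a (rcons ps (s, t)) t.
Proof.
elim: ps a => [|[s1 t1] ps IH] a /=; first by move=> -> *.
by move=> [? [? [? p]]] *; do !split => //; apply: IH.
Qed.

Lemma cgpath_last (K : complex V) W a ps b :
  cgpath K W a ps b -> b \in a :: map snd ps.
Proof.
elim: ps a => [|[s t] ps IH] a /=; first by move=> ->; rewrite mem_head.
by move=> [_ [_ [_ /IH p]]]; rewrite in_cons p orbT.
Qed.

End MorseSequence.

Section ReferencePair.
Variables (V : finType) (K : complex V) (W : seq (step V)).
Variables (wedge vee : simplex V -> complex V).
Hypotheses (HK : is_complex K) (HW : morse_seq K W) (HR : ref_pair K W wedge vee).

Lemma mem_cx_step P x Q y : P ++ x :: Q = W -> y \in added x -> y \in K.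
Proof. by case: HW => _ <- <- yx; rewrite cx_cat cx_cons !inE yx orbT. Qed.

Lemma wedge_path_critical c kappa :
  critical W c -> kappa \in wedge c -> wedge_path K W wedge c kappa.
Proof.
have [_ [_ [crit _]]] := HR; case/crit=> wedge_c _; rewrite wedge_c inE => /eqP ->.
by exists [::]; split => // y; rewrite !inE => /eqP ->; rewrite wedge_c inE.
Qed.

Lemma vee_path_critical c kappa :
  critical W c -> kappa \in vee c -> vee_path K W vee kappa c.
Proof.
have [_ [_ [crit _]]] := HR; case/crit=> _ vee_c; rewrite vee_c inE => /eqP ->.
by exists [::]; split => // y; rewrite !inE => /eqP ->; rewrite vee_c inE.
Qed.

Lemma wedge_expansion_face P s t Q kappa :
  P ++ inr (s, t) :: Q = W -> kappa \in wedge s ->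
  exists s', [/\ s' \in cx P, s' \in bnd K t, s' != s & kappa \in wedge s'].
Proof.
move=> eW ks; have stW : regular_pair W s t := mem_step eW.
have valid := morse_seq_valid_step HW eW.
have [_ [_ [st [card_t _]]]] := valid.
have [_ [_ [_ [up _]]]] := HR.
have [_ wedge_bnd0] := up t (introT existsP (ex_intro _ s stW)).
have s_bnd : s \in bnd K t.
  by rewrite inE (mem_cx_step eW) ?(proper_sub st) ?card_t ?eqxx //= !inE eqxx.
have [s' [s'_bnd s's ks']] := chain_map_eq0_other wedge_bnd0 s_bnd ks.
move: (s'_bnd); rewrite inE => /and3P[s'K s't /eqP card_s'].
exists s'; split=> //; apply: (valid_expansion_face valid) s's.
- by rewrite properEcard s't -card_s' ltnSn.
- by apply: contraNneq HK.1 => <-.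
Qed.

Lemma vee_expansion_coface P s t Q kappa :
  P ++ inr (s, t) :: Q = W -> kappa \in vee t ->
  exists t', [/\ t' \notin cx (rcons P (inr (s, t))), t' \in cobnd K s,
                 t' != t & kappa \in vee t'].
Proof.
move=> eW kt; have stW : regular_pair W s t := mem_step eW.
have valid := morse_seq_valid_step HW eW.
have [_ [_ [st [card_t _]]]] := valid.
have [_ [_ [_ [_ lo]]]] := HR.
have [_ vee_cobnd0] := lo s (introT existsP (ex_intro _ t stW)).
have t_cobnd : t \in cobnd K s.
  by rewrite inE (mem_cx_step eW) ?(proper_sub st) ?card_t ?eqxx //= !inE eqxx orbT.
have [t' [t'_cobnd t't kt']] := chain_map_eq0_other vee_cobnd0 t_cobnd kt.
move: (t'_cobnd); rewrite inE => /and3P[_ st' /eqP card_t'].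
exists t'; split=> //; rewrite cx_rcons; apply: (valid_expansion_coface valid) t't.
by rewrite properEcard st' card_t' ltnSn.
Qed.

Lemma wedge_path_of_prefix P Q nu kappa :
  P ++ Q = W -> nu \in cx P -> kappa \in wedge nu -> wedge_path K W wedge nu kappa.
Proof.
elim/last_ind: P Q nu kappa => [|P x IH] Q nu kappa; first by rewrite cx_nil inE.
rewrite cat_rcons cx_rcons inE => eW /orP[nuP | nux] k_nu; first exact: IH eW nuP k_nu.
have xW := mem_step eW.
case: x nux xW eW => [c | [s t]] /= nux xW eW.
  by move: nux k_nu; rewrite inE => /eqP ->; apply: wedge_path_critical.
move: nux k_nu; rewrite !inE => /orP[/eqP ->{nu} | /eqP nu_t]; last first.
  have [_ [_ [_ [up _]]]] := HR.
  have [wedge_t0 _] := up t (introT existsP (ex_intro _ s xW)).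
  by rewrite nu_t wedge_t0 inE.
move=> k_nu.
have [s' [s'P s'_bnd s's ks']] := wedge_expansion_face eW k_nu.
have [ps [path_s' on_path]] := IH _ _ _ eW s'P ks'.
exists ((t, s') :: ps); split; first by do !split => //; apply/eqP.
by move=> y; rewrite in_cons => /orP[/eqP -> // | /on_path].
Qed.

Lemma vee_path_of_suffix P Q nu kappa :
  P ++ Q = W -> nu \in K -> nu \notin cx P -> kappa \in vee nu ->
  vee_path K W vee kappa nu.
Proof.
elim: Q P nu kappa => [|x Q IH] P nu kappa.
  by rewrite cats0 => eW nuK; case: HW => _; rewrite -eW => ->; rewrite nuK.
move=> eW nuK nuP k_nu; have eW' : rcons P x ++ Q = W by rewrite cat_rcons.
have [nu_later | nux] := boolP (nu \notin cx (rcons P x)).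
  exact: IH eW' nuK nu_later k_nu.
move: nux; rewrite negbK cx_rcons inE (negPf nuP) /= => nux.
have xW := mem_step eW.
case: x nux xW eW eW' => [c | [s t]] /= nux xW eW eW'.
  by move: nux k_nu; rewrite inE => /eqP ->; apply: vee_path_critical.
move: nux k_nu; rewrite !inE => /orP[/eqP nu_s | /eqP -> k_nu].
  have [_ [_ [_ [_ lo]]]] := HR.
  have [vee_s0 _] := lo s (introT existsP (ex_intro _ t xW)).
  by rewrite nu_s vee_s0 inE.
have [t' [t'_later t'_cobnd t't kt']] := vee_expansion_coface eW k_nu.
move: (t'_cobnd); rewrite inE => /andP[t'K _].
have [ps [path_t' on_path]] := IH _ _ _ eW' t'K t'_later kt'.
exists (rcons ps (s, t)); split.
  by apply: (cgpath_rcons path_t') => // t_eq; rewrite t_eq eqxx in t't.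
move=> y; rewrite map_rcons in_cons mem_rcons in_cons.
case/orP => [/eqP -> | /orP[/eqP -> // | y_ps]]; apply: on_path.
- exact: mem_head.
- by rewrite in_cons y_ps orbT.
Qed.

End ReferencePair.

Theorem corollary1 (V : finType) (K : complex V) (W : seq (step V))
    (wedge vee : simplex V -> complex V) :
  is_complex K -> morse_seq K W -> ref_pair K W wedge vee ->
  forall kappa nu : simplex V, critical W kappa -> nu \in K ->
    (kappa \in wedge nu <-> wedge_path K W wedge nu kappa) /\
    (kappa \in vee nu <-> vee_path K W vee kappa nu).
Proof.
move=> HK HW HR kappa nu _ nuK; split; split.
- by apply: (wedge_path_of_prefix HK HW HR (cats0 W)); case: HW => _ ->.
- by case=> ps [_ on_path]; apply: on_path; rewrite mem_head.
- by apply: (vee_path_of_suffix HW HR (cat0s W) nuK); rewrite cx_nil inE.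
- by case=> ps [path on_path]; apply/on_path/(cgpath_last path).
Qed.
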